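(* Obstacles are invariant under gauge transformations. Precisely, let $L\in K[D]$ with $\operatorname{Sym}_L=S_1\cdots S_k$ (homogeneous $S_i$), and let $g\in K$ be invertible. Let $I=(\operatorname{Sym}_L/S_1,\dots,\operatorname{Sym}_L/S_k)\subseteq K[X_1,\dots,X_n]$. Then the set of classes in $K[X_1,\dots,X_n]/I$ of the symbols of common obstacles to factorization of $L$ of type $(S_1)\cdots(S_k)$ equals the corresponding set for the operator $g^{-1}\circ L\circ g$, which has the same symbol and the same type.
   Context: $K$ is a field with commuting derivations $\partial_1,\dots,\partial_n$, and $K[D]=K[D_1,\dots,D_n]$ is the ring of linear differential operators over $K$: the $D_i$ commute with each other and $D_i\circ a=aD_i+\partial_i(a)$ for $a\in K$. Every $L\in K[D]$ is uniquely $\sum_{|J|\le d}a_JD^J$ with $a_J\in K$ and $D^J=D_1^{j_1}\cdots D_n^{j_n}$. The order $\operatorname{ord}(L)$ is the largest $|J|$ with $a_J\ne0$, and $\operatorname{ord}(0)=-\infty$. The symbol $\operatorname{Sym}_L=\sum_{|J|=\operatorname{ord}L}a_JX^J$, with $\operatorname{Sym}_0=0$. A factorization of type $(S_1)\cdots(S_k)$ of $M$ is $M=F_1\circ\cdots\circ F_k$ with $\operatorname{Sym}_{F_i}=S_i$. A common obstacle to factorization of $M$ of that type is an operator $R$ such that $M-R$ has such a factorization and $R$ has minimal possible order among such operators. The ring $K[X]/I$ is called the ring of obstacles. The class of the symbols of common obstacles in it is called the obstacle to factorization; these symbols lie in one class when the $S_i$ are pairwise coprime. *)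

From HB Require Import structures.
From mathcomp Require Import all_boot all_order all_algebra.
From mathcomp Require Import mpoly.
Set Implicit Arguments. Unset Strict Implicit. Unset Printing Implicit Defensive.
Import Order.TTheory GRing.Theory.
Local Open Scope ring_scope.

(* Operators  L = \sum_J a_J D^J  in K[D] are represented by their coefficient
   families, i.e. by the (commutative) polynomial \sum_J a_J X^J in
   {mpoly K[n]}; the (noncommutative) composition is [opmul] below. *)

Section Ops.
Variables (K : fieldType) (n : nat) (d : 'I_n -> K -> K).

(* D_i o M = \sum_m ( b_m D^(m + e_i) + d_i(b_m) D^m ) *)
Definition Dmul (i : 'I_n) (M : {mpoly K[n]}) : {mpoly K[n]} :=
  M * 'X_i + \sum_(m <- msupp M) (d i (M@_m)) *: 'X_[m].

Definition Dpow (J : 'X_{1..n}) (M : {mpoly K[n]}) : {mpoly K[n]} :=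
  foldr (fun i acc => iter (J i) (Dmul i) acc) M (enum 'I_n).

Definition opmul (L M : {mpoly K[n]}) : {mpoly K[n]} :=
  \sum_(J <- msupp L) L@_J *: Dpow J M.

Definition opprod (Fs : seq {mpoly K[n]}) : {mpoly K[n]} :=
  foldr opmul 1 Fs.

End Ops.

Section Symb.
Variables (K : fieldType) (n : nat).

(* ord L + 1 is msize L (msize 0 = 0 encodes ord 0 = -oo). *)
Definition Sym (L : {mpoly K[n]}) : {mpoly K[n]} :=
  \sum_(m <- msupp L | mdeg m == (msize L).-1) L@_m *: 'X_[m].

Definition is_homog (S : {mpoly K[n]}) : Prop := exists e : nat, S \is e.-homog.

End Symb.

Section Obstacle.
Variables (K : fieldType) (n : nat) (d : 'I_n -> K -> K).

Definition has_factorization (Ss : seq {mpoly K[n]}) (M : {mpoly K[n]}) : Prop :=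
  exists Fs : seq {mpoly K[n]},
    [/\ size Fs = size Ss, map (@Sym K n) Fs = Ss & M = opprod d Fs].

Definition common_obstacle (Ss : seq {mpoly K[n]}) (M R : {mpoly K[n]}) : Prop :=
  has_factorization Ss (M - R) /\
  forall R' : {mpoly K[n]}, has_factorization Ss (M - R') -> (msize R <= msize R')%N.

(* Sym_L / S_i = \prod_(j != i) S_j  when Sym_L = S_1 ... S_k *)
Definition cofactor (Ss : seq {mpoly K[n]}) (i : nat) : {mpoly K[n]} :=
  \prod_(j < size Ss | j != i :> nat) Ss`_j.

Definition in_obstacle_ideal (Ss : seq {mpoly K[n]}) (p : {mpoly K[n]}) : Prop :=
  exists c : nat -> {mpoly K[n]},
    p = \sum_(i < size Ss) c i * cofactor Ss i.

Definition same_obstacle_classes (Ss : seq {mpoly K[n]}) (L L' : {mpoly K[n]}) : Prop :=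
  (forall R, common_obstacle Ss L R ->
     exists R', common_obstacle Ss L' R' /\ in_obstacle_ideal Ss (Sym R - Sym R')) /\
  (forall R', common_obstacle Ss L' R' ->
     exists R, common_obstacle Ss L R /\ in_obstacle_ideal Ss (Sym R - Sym R')).

End Obstacle.

From HB Require Import structures.
From mathcomp Require Import all_boot all_order all_algebra.
From mathcomp Require Import mpoly ssrcomplements.
Import GRing.Theory.
Local Open Scope ring_scope.

(* The gauge map X |-> g^-1 o X o g is multiplicative for the (associative)
   composition of operators, and it changes an operator only in lower order,
   since X o g = g X + (terms of lower order).  Hence it preserves order and
   symbol, maps factorizations of type (S_1)...(S_k) to factorizations of the
   same type, and its inverse is the gauge map of g^-1.  It therefore maps the
   common obstacles of L bijectively onto those of g^-1 o L o g, without
   changing their symbols. *)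

Section MpolySize.
Context {R : ringType} {n : nat}.

Lemma mcoeff_sumX (s : seq 'X_{1..n})
    (P : pred 'X_{1..n}) (F : 'X_{1..n} -> R) k :
  uniq s ->
  (\sum_(m <- s | P m) F m *: 'X_[m] : {mpoly R[n]})@_k
    = if (k \in s) && P k then F k else 0.
Proof.
elim: s => [|a s IHs] /=; first by rewrite big_nil mcoeff0.
case/andP=> a_s uniq_s; rewrite big_cons in_cons; move: IHs.
have [->|neq_ka] := eqVneq k a => IHs.
  rewrite (negbTE a_s) /=; case: (P a) => /=; last by rewrite IHs // (negbTE a_s).
  by rewrite mcoeffD mcoeffZ mcoeffX eqxx mulr1 IHs // (negbTE a_s) addr0.
case: (P a) => /=; last exact: IHs.
by rewrite mcoeffD mcoeffZ mcoeffX eq_sym (negbTE neq_ka) mulr0 add0r IHs.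
Qed.

Lemma msize_leq (M : {mpoly R[n]}) (N : nat) :
  (forall m, m \in msupp M -> mdeg m < N)%N -> (msize M <= N)%N.
Proof. by move=> ltN; rewrite mmeasureE; apply/bigmax_leqP_seq => m /ltN. Qed.

Lemma msize_subset (M N : {mpoly R[n]}) :
  {subset msupp M <= msupp N} -> (msize M <= msize N)%N.
Proof. by move=> sMN; apply: msize_leq => m /sMN /msize_mdeg_lt. Qed.

Lemma msize_mulX (M : {mpoly R[n]}) m :
  (msize (M * 'X_[m]) <= msize M + mdeg m)%N.
Proof.
apply: msize_leq => m'; rewrite (perm_mem (msuppMX M m)).
by case/mapP=> m'' /msize_mdeg_lt ? ->; rewrite mdegD addnC ltn_add2r.
Qed.

End MpolySize.

Section SymLower.
Context {K : fieldType} {n : nat}.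

Lemma mcoeff_Sym (P : {mpoly K[n]}) k :
  (Sym P)@_k = if mdeg k == (msize P).-1 then P@_k else 0.
Proof.
rewrite /Sym mcoeff_sumX ?msupp_uniq //.
by case: (boolP (k \in msupp P)) => [//|/memN_msupp_eq0 ->]; case: ifP.
Qed.

Lemma msize_Sym_add_lower (R E : {mpoly K[n]}) :
  (msize E <= (msize R).-1)%N ->
  msize (R + E) = msize R /\ Sym (R + E) = Sym R.
Proof.
have [->|nzR] := eqVneq R 0.
  by rewrite mmeasure0 leqn0 msize_poly_eq0 => /eqP ->; rewrite addr0 mmeasure0.
have szR_gt0 : (0 < msize R)%N by rewrite lt0n msize_poly_eq0.
move=> szE; have ltE : (msize E < msize R)%N by rewrite (leq_ltn_trans szE) ?prednK.
have szRE : msize (R + E) = msize R.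
  apply/eqP; rewrite eqn_leq; apply/andP; split.
    by apply: leq_trans (mmeasureD_le _ _ _) _; rewrite geq_max leqnn ltnW.
  have := mmeasureD_le mdeg (R + E) (- E); rewrite addrK mmeasureN leq_max.
  by case/orP => // /(leq_trans ltE); rewrite ltnn.
split=> //; apply/mpolyP => k; rewrite !mcoeff_Sym szRE mcoeffD.
case: eqP => // deg_k; have /mmeasure_mnm_ge/memN_msupp_eq0 -> : (msize E <= mdeg k)%N.
  by rewrite deg_k.
by rewrite addr0.
Qed.

End SymLower.

Section Gauge.
Context {K : fieldType} {n : nat}.
Variable d : 'I_n -> K -> K.
Hypothesis d_add : forall i (a b : K), d i (a + b) = d i a + d i b.
Hypothesis d_mul : forall i (a b : K), d i (a * b) = d i a * b + a * d i b.
Hypothesis d_comm : forall i j (a : K), d i (d j a) = d j (d i a).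

Implicit Types (A B C M N X : {mpoly K[n]}).

Lemma d0 i : d i 0 = 0.
Proof. by apply: (@addrI _ (d i 0)); rewrite addr0 -d_add addr0. Qed.

Lemma d1 i : d i 1 = 0.
Proof.
by apply: (@addrI _ (d i 1)); rewrite addr0 -[in RHS](mulr1 1) d_mul mul1r mulr1.
Qed.

Definition dmap i M : {mpoly K[n]} := \sum_(m <- msupp M) d i M@_m *: 'X_[m].

Lemma mcoeff_dmap i M k : (dmap i M)@_k = d i M@_k.
Proof.
rewrite /dmap (mcoeff_sumX _ predT) ?msupp_uniq // andbT.
by case: (boolP (k \in msupp M)) => [//|/memN_msupp_eq0 ->]; rewrite d0.
Qed.

Lemma dmapD i M N : dmap i (M + N) = dmap i M + dmap i N.
Proof. by apply/mpolyP=> k; rewrite mcoeffD !mcoeff_dmap mcoeffD d_add. Qed.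

Lemma dmap0 i : dmap i 0 = 0.
Proof. by apply/mpolyP=> k; rewrite mcoeff_dmap !mcoeff0 d0. Qed.

Lemma dmapZ i c M : dmap i (c *: M) = c *: dmap i M + d i c *: M.
Proof.
by apply/mpolyP=> k; rewrite mcoeffD !mcoeffZ !mcoeff_dmap mcoeffZ d_mul addrC.
Qed.

Lemma dmapX i c m : dmap i (c *: 'X_[m]) = d i c *: 'X_[m].
Proof.
apply/mpolyP=> k; rewrite mcoeff_dmap !mcoeffZ mcoeffX.
by case: (m == k); rewrite ?mulr1 ?mulr0 ?d0.
Qed.

Lemma dmap_sum i (s : seq 'X_{1..n}) (F : 'X_{1..n} -> {mpoly K[n]}) :
  dmap i (\sum_(m <- s) F m) = \sum_(m <- s) dmap i (F m).
Proof. exact: (big_morph _ (dmapD i) (dmap0 i)). Qed.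

Lemma dmapMX i M m : dmap i (M * 'X_[m]) = dmap i M * 'X_[m].
Proof.
rewrite {1}(mpolyE M) mulr_suml dmap_sum [X in _ = X * _]/dmap mulr_suml.
by apply: eq_bigr => m' _; rewrite -!scalerAl -!mpolyXD dmapX.
Qed.

Lemma dmap_comm i j M : dmap i (dmap j M) = dmap j (dmap i M).
Proof. by apply/mpolyP=> k; rewrite !mcoeff_dmap d_comm. Qed.

Lemma msize_dmap i M : (msize (dmap i M) <= msize M)%N.
Proof.
apply: msize_subset => m; rewrite !mcoeff_msupp mcoeff_dmap.
by apply: contraNN => /eqP ->; rewrite d0.
Qed.

Lemma DmulE i M : Dmul d i M = M * 'X_i + dmap i M.
Proof. by []. Qed.

Lemma DmulD i M N : Dmul d i (M + N) = Dmul d i M + Dmul d i N.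
Proof. by rewrite !DmulE mulrDl dmapD addrACA. Qed.

Lemma Dmul0 i : Dmul d i 0 = 0.
Proof. by rewrite DmulE mul0r dmap0 addr0. Qed.

Lemma Dmul_sum i (s : seq 'X_{1..n}) (F : 'X_{1..n} -> {mpoly K[n]}) :
  Dmul d i (\sum_(m <- s) F m) = \sum_(m <- s) Dmul d i (F m).
Proof. exact: (big_morph _ (DmulD i) (Dmul0 i)). Qed.

Lemma DmulZ i c M : Dmul d i (c *: M) = c *: Dmul d i M + d i c *: M.
Proof. by rewrite !DmulE dmapZ scalerDr -scalerAl addrA. Qed.

Lemma DmulX i c m :
  Dmul d i (c *: 'X_[m]) = c *: 'X_[m + U_(i)] + d i c *: 'X_[m].
Proof. by rewrite DmulE dmapX -scalerAl mpolyXD. Qed.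

Lemma Dmul_comm i j M : Dmul d i (Dmul d j M) = Dmul d j (Dmul d i M).
Proof.
rewrite !DmulE !dmapD !dmapMX dmap_comm !mulrDl -!mulrA [_ * 'X_i]mulrC.
by rewrite -!addrA; congr (_ + _); rewrite addrCA.
Qed.

Lemma iter_Dmul_comm k i j M :
  iter k (Dmul d j) (Dmul d i M) = Dmul d i (iter k (Dmul d j) M).
Proof. by elim: k => //= k ->; rewrite Dmul_comm. Qed.

Definition Dpow_on (s : seq 'I_n) (J : 'X_{1..n}) M :=
  foldr (fun j acc => iter (J j) (Dmul d j) acc) M s.

Lemma Dpow_onU s J M i : uniq s ->
  Dpow_on s (J + U_(i)) M = if i \in s then Dmul d i (Dpow_on s J M) else Dpow_on s J M.
Proof.
elim: s => [|j s IHs] //= /andP[j_s uniq_s]; rewrite mnmDE mnm1E in_cons IHs //.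
have [->|neq_ij] := eqVneq i j; first by rewrite (negbTE j_s) addn1.
by rewrite addn0; case: (i \in s); rewrite ?iter_Dmul_comm.
Qed.

Lemma DpowU J i M : Dpow d (J + U_(i)) M = Dmul d i (Dpow d J M).
Proof. by have := Dpow_onU (enum 'I_n) J M i (enum_uniq 'I_n); rewrite mem_enum. Qed.

Lemma Dpow0 M : Dpow d 0 M = M.
Proof. by rewrite /Dpow; elim: (enum 'I_n) => //= i s ->; rewrite mnm0E. Qed.

Lemma Dpow_ind (P : 'X_{1..n} -> {mpoly K[n]} -> Prop) M :
  P 0%MM M -> (forall m X i, P m X -> P (m + U_(i))%MM (Dmul d i X)) ->
  forall J, P J (Dpow d J M).
Proof.
move=> P0 PS J.
suff /(_ (enum 'I_n)) : forall s, P (\sum_(j <- s) U_(j) *+ J j)%MM (Dpow_on s J M).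
  by rewrite big_enum /= -multinomUE_id.
elim=> [|j s IHs] /=; first by rewrite big_nil.
rewrite big_cons; elim: (J j) => [|k IHk] /=; first by rewrite mulm0n add0m.
by rewrite mulmS -addmA addmC; apply: PS.
Qed.

Lemma Dpow_commute (f : {mpoly K[n]} -> {mpoly K[n]}) :
  (forall i M, f (Dmul d i M) = Dmul d i (f M)) ->
  forall J M, f (Dpow d J M) = Dpow d J (f M).
Proof.
move=> fD J M; rewrite /Dpow; elim: (enum 'I_n) => //= i s IHs.
by elim: (J i) => [|k IHk] //=; rewrite fD IHk.
Qed.

Lemma Dpow1 J : Dpow d J 1 = 'X_[J].
Proof.
apply: (Dpow_ind (fun m X => X = 'X_[m])); first by rewrite mpolyX0.
by move=> m X i ->; rewrite -[X in Dmul _ _ X]scale1r DmulX d1 scale0r addr0 scale1r.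
Qed.

Lemma opmul_bigE A C k : (msize A <= k)%N ->
  opmul d A C = \sum_(m : 'X_{1..n < k}) A@_m *: Dpow d m C.
Proof.
move=> szA; rewrite /opmul (big_mksub 'X_{1..n < k}) ?msupp_uniq //=; last first.
  by move=> m /msize_mdeg_lt /leq_trans; apply.
by rewrite big_rmcond //= => m /memN_msupp_eq0 ->; rewrite scale0r.
Qed.

Lemma opmulDl A B C : opmul d (A + B) C = opmul d A C + opmul d B C.
Proof.
pose k := maxn (msize A) (msize B).
rewrite !(opmul_bigE _ _ k) ?leq_maxl ?leq_maxr ?mmeasureD_le // -big_split.
by apply: eq_bigr => m _; rewrite mcoeffD scalerDl.
Qed.

Lemma opmulZl c A C : opmul d (c *: A) C = c *: opmul d A C.
Proof.
rewrite !(opmul_bigE _ _ (msize A)) ?mmeasureZ_le // scaler_sumr.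
by apply: eq_bigr => m _; rewrite mcoeffZ scalerA.
Qed.

Lemma opmul0l C : opmul d 0 C = 0.
Proof. by rewrite /opmul msupp0 big_nil. Qed.

Lemma opmulBl A B C : opmul d (A - B) C = opmul d A C - opmul d B C.
Proof. by rewrite opmulDl -scaleN1r opmulZl scaleN1r. Qed.

Lemma opmul_suml (s : seq 'X_{1..n}) (F : 'X_{1..n} -> {mpoly K[n]}) C :
  opmul d (\sum_(m <- s) F m) C = \sum_(m <- s) opmul d (F m) C.
Proof. exact: (big_morph (opmul d ^~ C) (fun A B => opmulDl A B C) (opmul0l C)). Qed.

Lemma opmulXl m C : opmul d 'X_[m] C = Dpow d m C.
Proof. by rewrite /opmul msuppX big_seq1 mcoeffX eqxx scale1r. Qed.

Lemma opmulCl c C : opmul d c%:MP C = c *: C.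
Proof.
rewrite /opmul msuppC; case: eqP => [->|_]; first by rewrite big_nil scale0r.
by rewrite big_seq1 mcoeffC eqxx mulr1 Dpow0.
Qed.

Lemma opmulr1 A : opmul d A 1 = A.
Proof. by rewrite [RHS]mpolyE; apply: eq_bigr => J _; rewrite Dpow1. Qed.

Lemma opmul_Dmul i B C : opmul d (Dmul d i B) C = Dmul d i (opmul d B C).
Proof.
rewrite (mpolyE B) Dmul_sum !opmul_suml Dmul_sum; apply: eq_bigr => m _.
by rewrite DmulX opmulDl !opmulZl !opmulXl DpowU DmulZ.
Qed.

Lemma opmulA A B C : opmul d (opmul d A B) C = opmul d A (opmul d B C).
Proof.
rewrite [opmul d A B]/opmul opmul_suml; apply: eq_bigr => J _.
by rewrite opmulZl (Dpow_commute (opmul d ^~ C)) // => i X; apply: opmul_Dmul.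
Qed.

(* The leading term of D^J o c is c X^J: every derivative of c has lower order. *)
Lemma msize_Dpow_CB c J : (msize (Dpow d J c%:MP - c *: 'X_[J]) <= mdeg J)%N.
Proof.
apply: (Dpow_ind (fun m X => msize (X - c *: 'X_[m]) <= mdeg m)%N).
  by rewrite mpolyX0 -alg_mpolyC subrr mmeasure0.
move=> m X i; set E := X - _ => szE.
have -> : X = c *: 'X_[m] + E by rewrite /E addrC subrK.
rewrite DmulD DmulX addrAC [c *: _ + _]addrC addrK DmulE mdegD mdeg1 addn1.
apply: leq_trans (mmeasureD_le _ _ _) _; rewrite geq_max; apply/andP; split.
  by apply: leq_trans (mmeasureZ_le _ _ _) _; rewrite msizeX.
apply: leq_trans (mmeasureD_le _ _ _) _; rewrite geq_max; apply/andP; split.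
  by apply: leq_trans (msize_mulX _ _) _; rewrite mdeg1 addn1.
exact: leq_trans (msize_dmap _ _) (leq_trans szE _).
Qed.

Lemma msize_opmul_CB A c : (msize (opmul d A c%:MP - c *: A) <= (msize A).-1)%N.
Proof.
have -> : c *: A = \sum_(J <- msupp A) A@_J *: (c *: 'X_[J]).
  by rewrite {1}(mpolyE A) scaler_sumr; apply: eq_bigr => J _; rewrite !scalerA mulrC.
rewrite /opmul -sumrB big_seq.
apply: (big_ind (fun P => msize P <= (msize A).-1)%N); first by rewrite mmeasure0.
  by move=> P Q szP szQ; apply: leq_trans (mmeasureD_le _ _ _) _; rewrite geq_max szP szQ.
move=> J /msize_mdeg_lt ltJ; rewrite -scalerBr.
apply: leq_trans (mmeasureZ_le _ _ _) (leq_trans (msize_Dpow_CB _ _) _).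
by rewrite -ltnS prednK // (leq_ltn_trans _ ltJ).
Qed.

Definition gauge (g : K) X := g^-1 *: opmul d X g%:MP.

Section FixedGauge.
Variable g : K.
Hypothesis nz_g : g != 0.

Lemma msize_Sym_gauge X : msize (gauge g X) = msize X /\ Sym (gauge g X) = Sym X.
Proof.
have -> : gauge g X = X + g^-1 *: (opmul d X g%:MP - g *: X).
  by rewrite scalerBr scalerA mulVf // scale1r addrC subrK.
by apply: msize_Sym_add_lower; apply: leq_trans (mmeasureZ_le _ _ _) (msize_opmul_CB _ _).
Qed.

Lemma gaugeB A B : gauge g (A - B) = gauge g A - gauge g B.
Proof. by rewrite /gauge opmulBl scalerBr. Qed.

Lemma gauge_opmul A B : gauge g (opmul d A B) = opmul d (gauge g A) (gauge g B).
Proof.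
rewrite /gauge [in RHS]opmulZl [in RHS]opmulA [in RHS]opmulCl.
by rewrite scalerA mulfV // scale1r opmulA.
Qed.

Lemma gauge1 : gauge g 1 = 1.
Proof. by rewrite /gauge -mpolyC1 opmulCl scale1r -mul_mpolyC -mpolyCM mulVf. Qed.

Lemma gauge_opprod Fs : gauge g (opprod d Fs) = opprod d (map (gauge g) Fs).
Proof. by elim: Fs => [|F Fs IHFs] /=; rewrite ?gauge1 // gauge_opmul IHFs. Qed.

Lemma gaugeK X : gauge g^-1 (gauge g X) = X.
Proof.
rewrite /gauge invrK opmulZl scalerA mulfV // scale1r opmulA opmulCl.
by rewrite -mul_mpolyC -mpolyCM mulfV // mpolyC1 opmulr1.
Qed.

Lemma gauge_has_factorization Ss X :
  has_factorization d Ss X -> has_factorization d Ss (gauge g X).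
Proof.
case=> Fs [size_Fs sym_Fs ->]; exists (map (gauge g) Fs); split.
- by rewrite size_map.
- by rewrite -sym_Fs -map_comp; apply: eq_map => F /=; case: (msize_Sym_gauge F).
- by rewrite gauge_opprod.
Qed.

End FixedGauge.

Lemma Sym_gauge g X : g != 0 -> Sym (gauge g X) = Sym X.
Proof. by move=> nz_g; case: (msize_Sym_gauge _ nz_g X). Qed.

Lemma gauge_common_obstacle g Ss M R : g != 0 ->
  common_obstacle d Ss M R -> common_obstacle d Ss (gauge g M) (gauge g R).
Proof.
move=> nz_g [fact_MR min_R].
have nz_ginv : g^-1 != 0 by rewrite invr_eq0.
split; first by rewrite -gaugeB //; apply: gauge_has_factorization.
move=> R' /(gauge_has_factorization _ nz_ginv); rewrite gaugeB // gaugeK // => /min_R.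
by case: (msize_Sym_gauge _ nz_g R) => ->; case: (msize_Sym_gauge _ nz_ginv R') => ->.
Qed.

End Gauge.

Theorem mainTheorem9 (K : fieldType) (n : nat) (d : 'I_n -> K -> K)
  (d_add : forall i (a b : K), d i (a + b) = d i a + d i b)
  (d_mul : forall i (a b : K), d i (a * b) = d i a * b + a * d i b)
  (d_comm : forall i j (a : K), d i (d j a) = d j (d i a))
  (L : {mpoly K[n]}) (Ss : seq {mpoly K[n]})
  (Ss_homog : forall S, S \in Ss -> is_homog S)
  (symL : Sym L = \prod_(S <- Ss) S)
  (g : K) (g_unit : g != 0) :
  let L' := opmul d (opmul d (g^-1)%:MP L) g%:MP in
  Sym L' = Sym L /\ same_obstacle_classes d Ss L L'.
Proof.
move=> L'; have -> : L' = gauge d g L by rewrite /L' opmulCl opmulZl.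
have nz_ginv : g^-1 != 0 by rewrite invr_eq0.
have obstacle_gauge := @gauge_common_obstacle _ _ d d_add d_mul d_comm.
have zero_in_ideal : in_obstacle_ideal Ss 0.
  by exists (fun=> 0); rewrite big1 // => i _; rewrite mul0r.
split; first by rewrite Sym_gauge.
split=> [R obst_R | R' obst_R'].
- exists (gauge d g R); rewrite Sym_gauge // subrr.
  by split=> //; apply: obstacle_gauge.
- exists (gauge d g^-1 R'); rewrite Sym_gauge // subrr; split=> //.
  by rewrite -[L](@gaugeK _ _ d d_add d_mul d_comm _ g_unit); apply: obstacle_gauge.
Qed.
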